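(* Fix $0<s\le1$, let $\rho:=\rho(s)=e^s/s$, and let $\phi:(0,1]\to[1,\infty)$ be integrable. If there exists a tight $(\rho,\chi)$-bidding profile induced by $\phi$, then for all $x\in(0,1]$, \[ \phi(x)\ge\max\left(1,\ s\chi\, e^{s(x-1)}\right). \]
   Context: Given $1<\chi\le\rho$, a $(\rho,\chi)$-bidding profile is a non-decreasing, left-continuous $G:\mathbb{R}\to(0,\infty)$ with (offset) $G(x)<1$ for $x<0$ and $G(x)\ge1$ for $x>0$; (robustness) $\int_{-\infty}^{x+1}G(t)\,\mathrm{d} t\le\rho G(x)$ for all $x\in\mathbb{R}$; (consistency) $\int_{-\infty}^1G(t)\,\mathrm{d} t\le\chi$. It is tight if additionally $\int_{-\infty}^{x+1}G(t)\,\mathrm{d} t=\rho G(x)$ for all $x\le0$ and $\int_{-\infty}^1G(t)\,\mathrm{d} t=\chi$. It is induced by $\phi$ if $G|_{(0,1]}\equiv\phi$. *)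

From HB Require Import structures.
From mathcomp Require Import all_boot all_order all_algebra.
From mathcomp Require Import all_classical all_reals all_analysis.
Set Implicit Arguments. Unset Strict Implicit. Unset Printing Implicit Defensive.
Import Order.TTheory GRing.Theory Num.Theory.
Import numFieldNormedType.Exports.
Local Open Scope classical_set_scope.
Local Open Scope ring_scope.

(* Integral of G over (-oo, a], a Lebesgue integral in the extended reals
   (G is positive, so this is the improper integral \int_{-oo}^a G). *)
Definition int_upto (R : realType) (G : R -> R) (a : R) : \bar R :=
  (\int[@lebesgue_measure R]_(t in `]-oo, a]) (G t)%:E)%E.

Definition bidding_profile (R : realType) (rho chi : R) (G : R -> R) : Prop :=
  [/\ (forall x y : R, x <= y -> G x <= G y),
      (forall x : R, G t @[t --> x^'-] --> G x),
      (forall x : R, 0 < G x) /\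
      ((forall x : R, x < 0 -> G x < 1) /\ (forall x : R, 0 < x -> 1 <= G x)),
      (forall x : R, (int_upto G (x + 1) <= (rho * G x)%:E)%E)
    & (int_upto G 1 <= chi%:E)%E ].

Definition tight_bidding_profile (R : realType) (rho chi : R) (G : R -> R) : Prop :=
  [/\ bidding_profile rho chi G,
      (forall x : R, x <= 0 -> int_upto G (x + 1) = (rho * G x)%:E)
    & int_upto G 1 = chi%:E ].

Definition induced_by (R : realType) (G phi : R -> R) : Prop :=
  forall x : R, 0 < x <= 1 -> G x = phi x.

From HB Require Import structures.
From mathcomp Require Import all_boot all_order all_algebra.
From mathcomp Require Import all_classical all_reals all_analysis.
From mathcomp Require Import measurable_realfun ring lra.
Import Order.TTheory GRing.Theory Num.Theory.
Import numFieldNormedType.Exports.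
Local Open Scope classical_set_scope.
Local Open Scope ring_scope.

Set Implicit Arguments.
Unset Strict Implicit.
Unset Printing Implicit Defensive.

(* Let i a be the integral of G over (-oo, a].  As G is non-decreasing,
   i v >= i u + (v - u) G u, so any bound G >= a i integrates (through Euler's
   polygons (1 + a t / n)^n) to the growth bound i (x + t) >= e^(a t) i x.
   Robustness i (x + 1) <= rho G x turns a growth factor m of i over unit steps
   back into G >= (m / rho) i, hence into the factor e^(m / rho).  The best
   factor m thus satisfies m >= e^(m / rho), which for rho = e^s / s and s <= 1
   forces m >= e^s, i.e. G >= s i.  Finally
   phi x = G x >= i (x + 1) / rho >= e^(s x) i 1 / rho = s chi e^(s (x - 1)),
   and phi x >= 1 is the offset condition. *)

Section exponential_bounds.
Variable R : realType.

Lemma expR_div1D_le1D (h : R) : 0 <= h -> expR (h / (1 + h)) <= 1 + h.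
Proof.
move=> h_ge0; have h1_gt0 : 0 < 1 + h by lra.
have := expR_ge1Dx (- (h / (1 + h))).
have -> : 1 + - (h / (1 + h)) = (1 + h)^-1 by field; rewrite gt_eqF.
by rewrite expRN lef_pV2 ?posrE ?expR_gt0.
Qed.

Lemma expR_le_pow1D (b : R) (n : nat) : 0 <= b ->
  expR b * (1 - b ^+ 2 / n.+1%:R) <= (1 + b / n.+1%:R) ^+ n.+1.
Proof.
move=> b_ge0; set N : R := n.+1%:R.
have N_gt0 : 0 < N by rewrite ltr0n.
have bN_ge0 : 0 <= b / N by rewrite divr_ge0 // ltW.
have pow_ge : expR (b - b ^+ 2 / (N + b)) <= (1 + b / N) ^+ n.+1.
  have -> : b - b ^+ 2 / (N + b) = N * ((b / N) / (1 + b / N)).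
    by field; rewrite !gt_eqF //; lra.
  rewrite expRM_natl lerXn2r ?nnegrE ?expR_ge0 ?addr_ge0 //.
  exact: expR_div1D_le1D.
apply: le_trans pow_ge; rewrite expRD ler_wpM2l ?expR_ge0 //.
apply: le_trans (expR_ge1Dx _); rewrite lerD2l lerN2.
by rewrite ler_wpM2l ?sqr_ge0 // lef_pV2 ?posrE ?lerDl //; lra.
Qed.

Lemma le_of_forall_subr_divn_le (x y c : R) :
  (forall n : nat, x - c / n.+1%:R <= y) -> x <= y.
Proof.
move=> le_xy; apply/ler_addgt0Pr => e e_gt0.
set n := Num.truncn (`|c| / e); set N : R := n.+1%:R.
have N_gt0 : 0 < N by rewrite ltr0n.
have cN_le : c / N <= e.
  rewrite ler_pdivrMr //; apply: le_trans (ler_norm c) _.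
  by rewrite mulrC -ler_pdivrMr // ltW // truncnS_gt.
by have := le_xy n; rewrite -/N lerBlDr => /le_trans; apply; rewrite lerD2l.
Qed.

Lemma expR_mul_le_of_pow1D (b B A : R) : 0 <= b -> 0 <= B ->
  (forall n : nat, (1 + b / n.+1%:R) ^+ n.+1 * B <= A) -> expR b * B <= A.
Proof.
move=> b_ge0 B_ge0 pow_le; apply: (@le_of_forall_subr_divn_le _ _ (expR b * b ^+ 2 * B)).
move=> n; apply: le_trans (pow_le n).
have -> : expR b * B - expR b * b ^+ 2 * B / n.+1%:R
        = expR b * (1 - b ^+ 2 / n.+1%:R) * B by ring.
by rewrite ler_wpM2r // expR_le_pow1D.
Qed.

Lemma expR_le_of_self_bound (s m : R) : 0 < s -> s <= 1 -> 0 < m ->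
  expR (m / (expR s / s)) <= m -> expR s <= m.
Proof.
move=> s_gt0 s_le1 m_gt0 self_bound; set r := ln m.
have m_expR : m = expR r by rewrite lnK // posrE.
rewrite m_expR ler_expR leNgt; apply/negP => r_lt_s.
have tangent : s * (1 + (r - s)) < s * expR (r - s).
  by rewrite ltr_pM2l // expR_gt1Dx // subr_eq0 lt_eqF.
have : s * expR (r - s) <= r.
  have -> : s * expR (r - s) = m / (expR s / s).
    by rewrite m_expR expRD expRN; field; rewrite !gt_eqF ?expR_gt0.
  by rewrite -ler_expR -m_expR.
have : s * (s - r) <= s - r by rewrite ler_piMl // subr_ge0 ltW.
nra.
Qed.

End exponential_bounds.

Section secant_growth.
Variables (R : realType) (G i : R -> R).
Hypothesis i_ge0 : forall u, 0 <= i u.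
Hypothesis i_secant : forall u v, u <= v -> i u + (v - u) * G u <= i v.

Section fixed_rate.
Variable a : R.
Hypothesis a_ge0 : 0 <= a.
Hypothesis G_ge_rate : forall u, a * i u <= G u.

Lemma secant_pow_growth x t n : 0 <= t ->
  (1 + a * t / n.+1%:R) ^+ n.+1 * i x <= i (x + t).
Proof.
move=> t_ge0; set N : R := n.+1%:R; set h := t / N.
have h_ge0 : 0 <= h by rewrite divr_ge0 // ler0n.
have factor_ge0 : 0 <= 1 + a * h by apply: addr_ge0; [exact: ler01 | exact: mulr_ge0].
suff polygon k : (1 + a * h) ^+ k * i x <= i (x + k%:R * h).
  by have := polygon n.+1; rewrite /h !mulrA -/N [N * t]mulrC mulfK ?pnatr_eq0.
elim: k => [|k IHk]; first by rewrite expr0 mul1r mul0r addr0.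
have le_step : x + k%:R * h <= x + k.+1%:R * h by rewrite lerD2l ler_wpM2r // ler_nat.
have step_len : x + k.+1%:R * h - (x + k%:R * h) = h by rewrite mulrS; ring.
have := i_secant le_step; rewrite step_len; apply: le_trans.
rewrite exprS -mulrA; apply: le_trans (ler_wpM2l factor_ge0 IHk) _.
by rewrite mulrDl mul1r lerD2l [a * h]mulrC -mulrA ler_wpM2l.
Qed.

Lemma secant_expR_growth x t : 0 <= t -> expR (a * t) * i x <= i (x + t).
Proof.
move=> t_ge0; apply: expR_mul_le_of_pow1D; rewrite ?mulr_ge0 //.
by move=> n; apply: secant_pow_growth.
Qed.

End fixed_rate.

Variable s : R.
Hypotheses (s_gt0 : 0 < s) (s_le1 : s <= 1).
Hypothesis G_gt0 : forall u, 0 < G u.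
Hypothesis i_robust : forall x, i (x + 1) <= expR s / s * G x.

Let rho_gt0 : 0 < expR s / s. Proof. by rewrite divr_gt0 ?expR_gt0. Qed.

Lemma secant_gt0 x : 0 < i x.
Proof.
have le_x : x - 1 <= x by rewrite gerBl.
have := i_secant le_x; rewrite subKr mul1r => le_sum.
by apply: lt_le_trans le_sum; rewrite ltr_wpDl.
Qed.

Lemma robust_profile_ge_rate m : (forall x, m * i x <= i (x + 1)) ->
  forall u, m / (expR s / s) * i u <= G u.
Proof.
move=> m_rate u; rewrite mulrAC ler_pdivrMr // [G u * _]mulrC.
exact: le_trans (m_rate u) (i_robust u).
Qed.

Lemma robust_profile_ge_s_mul u : s * i u <= G u.
Proof.
pose ratios := [set i (x + 1) / i x | x in [set: R]].
have ratios_ge1 : lbound ratios 1.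
  move=> _ [x _ <-]; rewrite ler_pdivlMr ?secant_gt0 // mul1r.
  have le_x : x <= x + 1 by rewrite lerDl.
  have := i_secant le_x; rewrite addrAC subrr add0r mul1r.
  by have := G_gt0 x; lra.
have ratios_lb : has_lbound ratios by exists 1.
have ratios_n0 : ratios !=set0 by exists (i (0 + 1) / i 0), 0.
set m := inf ratios.
have m_ge1 : 1 <= m by apply: lb_le_inf.
have m_rate x : m * i x <= i (x + 1).
  rewrite -ler_pdivlMr ?secant_gt0 //; apply: ge_inf => //; by exists x.
have rate_ge0 : 0 <= m / (expR s / s) by apply: divr_ge0; [lra | exact: ltW].
have self_bound : expR (m / (expR s / s)) <= m.
  apply: lb_le_inf => // _ [x _ <-]; rewrite ler_pdivlMr ?secant_gt0 //.
  by have := secant_expR_growth rate_ge0 (robust_profile_ge_rate m_rate) x ler01; rewrite mulr1.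
have := expR_le_of_self_bound s_gt0 s_le1 (lt_le_trans ltr01 m_ge1) self_bound.
move=> es_le_m; apply: le_trans (robust_profile_ge_rate m_rate u).
by rewrite ler_wpM2r // ler_pdivlMr // mulrC divfK ?gt_eqF.
Qed.

Lemma robust_expR_growth x t : 0 <= t -> expR (s * t) * i x <= i (x + t).
Proof. exact: secant_expR_growth (ltW s_gt0) robust_profile_ge_s_mul x t. Qed.

End secant_growth.

Section int_upto_nondecreasing.
Variables (R : realType) (G : R -> R).
Hypothesis G_nd : forall x y, x <= y -> G x <= G y.
Hypothesis G_gt0 : forall x, 0 < G x.

Lemma int_upto_ge0 a : (0 <= int_upto G a)%E.
Proof. by apply: integral_ge0 => x _; rewrite lee_fin ltW. Qed.

Lemma int_upto_secant a b : a <= b ->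
  (int_upto G a + ((b - a) * G a)%:E <= int_upto G b)%E.
Proof.
move=> le_ab; have G_mble : measurable_fun [set: R] (EFin \o G).
  by apply/measurable_EFinP; exact: nondecreasing_measurable.
rewrite /int_upto.
have -> : `]-oo, b]%classic = `]-oo, a]%classic `|` `]a, b]%classic :> set R.
  by apply: itv_bndbnd_setU; rewrite ?bnd_simp.
rewrite ge0_integral_setU //; last 3 first.
- exact: measurable_funTS.
- by move=> x _ /=; rewrite lee_fin ltW.
- apply/disj_setPS => x [/=]; rewrite !in_itv /= => xa /andP[ax _].
  by move: (lt_le_trans ax xa); rewrite ltxx.
apply: leeD2l.
have -> : ((b - a) * G a)%:E = (\int[lebesgue_measure]_(x in `]a, b]) (cst (G a)%:E) x)%E.
  rewrite integral_cst //= lebesgue_measure_itv /= lte_fin.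
  case: ltgtP le_ab => // [lt_ab _|-> _]; first by rewrite -EFinD -EFinM mulrC.
  by rewrite subrr mul0r mule0.
apply: ge0_le_integral => //.
- by move=> x _; rewrite lee_fin ltW.
- exact: measurable_funTS.
- by move=> x; rewrite /= in_itv /= lee_fin => /andP[/ltW a_le_x _]; apply: G_nd.
Qed.

End int_upto_nondecreasing.

Theorem lemma9 (R : realType) (s chi : R) (phi : R -> R) :
  0 < s -> s <= 1 ->
  1 < chi -> chi <= expR s / s ->
  (forall x : R, 0 < x <= 1 -> 1 <= phi x) ->
  (@lebesgue_measure R).-integrable `]0, 1] (EFin \o phi) ->
  (exists G : R -> R,
      tight_bidding_profile (expR s / s) chi G /\ induced_by G phi) ->
  forall x : R, 0 < x <= 1 ->
    Num.max 1 (s * chi * expR (s * (x - 1))) <= phi x.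
Proof.
move=> s_gt0 s_le1 _ _ _ _ [G [[G_profile _ G_int1] G_phi]] x /andP[x_gt0 x_le1].
case: G_profile => G_nd _ [G_gt0 [_ G_ge1]] G_robust _.
have int_upto_fin a : int_upto G a \is a fin_num.
  rewrite ge0_fin_numE ?int_upto_ge0 //.
  by have := G_robust (a - 1); rewrite subrK => /le_lt_trans; apply; apply: ltey.
pose i a := fine (int_upto G a).
have int_uptoE a : int_upto G a = (i a)%:E by rewrite fineK.
have i_ge0 a : 0 <= i a by rewrite -lee_fin -int_uptoE int_upto_ge0.
have i_secant u v : u <= v -> i u + (v - u) * G u <= i v.
  by move=> /(int_upto_secant G_nd G_gt0); rewrite !int_uptoE lee_fin.
have i_robust a : i (a + 1) <= expR s / s * G a.
  by have := G_robust a; rewrite int_uptoE lee_fin.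
have i1 : i 1 = chi by rewrite /i G_int1.
have := robust_expR_growth i_ge0 i_secant s_gt0 s_le1 G_gt0 i_robust 1 (ltW x_gt0).
rewrite i1 addrC => growth.
rewrite -G_phi ?x_gt0 // ge_max G_ge1 //=.
have -> : s * chi * expR (s * (x - 1)) = expR (s * x) * chi / (expR s / s).
  rewrite mulrBr mulr1 expRD expRN.
  by field; rewrite !gt_eqF ?expR_gt0.
rewrite ler_pdivrMr ?divr_gt0 ?expR_gt0 // [G x * _]mulrC.
exact: le_trans growth (i_robust x).
Qed.
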